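(* For all $n\ge1$, $$\mathbf{Sf}_{n,1}(p,q)=q^{n-1}\qquad\text{and}\qquad \mathbf{cf}_{n,1}(p,q)=\prod_{i=1}^{n-1}F_i(p,q).$$ For all $n\ge2$, $$\mathbf{Sf}_{n,2}(p,q)=q^{n-2}[n-1]_q\qquad\text{and}\qquad \mathbf{cf}_{n,n-1}(p,q)=\mathbf{Sf}_{n,n-1}(p,q)=\sum_{i=1}^{n-1}F_i(p,q).$$
   Context: $F_1(p,q)=q$, $F_2(p,q)=q^2$ and $F_m(p,q)=qF_{m-1}(p,q)+pF_{m-2}(p,q)$ for $m\ge3$. Let $(x)_{\downarrow_{F,p,q,0}}=(x)_{\uparrow_{F,p,q,0}}=1$ and for $k\ge1$, $(x)_{\downarrow_{F,p,q,k}}=x(x-F_1(p,q))\cdots(x-F_{k-1}(p,q))$ and $(x)_{\uparrow_{F,p,q,k}}=x(x+F_1(p,q))\cdots(x+F_{k-1}(p,q))$. Define $\mathbf{Sf}_{n,k}(p,q)$ and $\mathbf{cf}_{n,k}(p,q)$ for $0\le k\le n$ by $x^n=\sum_{k=0}^n\mathbf{Sf}_{n,k}(p,q)(x)_{\downarrow_{F,p,q,k}}$ and $(x)_{\uparrow_{F,p,q,n}}=\sum_{k=0}^n\mathbf{cf}_{n,k}(p,q)x^k$. For $m\ge1$, $[m]_q=1+q+\cdots+q^{m-1}$. *)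

From mathcomp Require Import all_boot all_order all_algebra.
Set Implicit Arguments. Unset Strict Implicit. Unset Printing Implicit Defensive.
Import GRing.Theory.
Local Open Scope ring_scope.

Fixpoint Fpq (R : comNzRingType) (p q : R) (m : nat) : R :=
  match m with
  | 0 => 0
  | 1 => q
  | (m'.+1 as m1).+1 => q * Fpq p q m1 + p * Fpq p q m'
  end.

(* (x)_{down F,p,q,k} = x (x - F_1) ... (x - F_{k-1}); empty product = 1 *)
Definition ffallF (R : comNzRingType) (p q : R) (k : nat) : {poly R} :=
  \prod_(i < k) ('X - (Fpq p q i)%:P).

(* (x)_{up F,p,q,k} = x (x + F_1) ... (x + F_{k-1}) *)
Definition frisF (R : comNzRingType) (p q : R) (k : nat) : {poly R} :=
  \prod_(i < k) ('X + (Fpq p q i)%:P).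

Definition cfF (R : comNzRingType) (p q : R) (n k : nat) : R :=
  (frisF p q n)`_k.

Definition qint (R : comNzRingType) (q : R) (m : nat) : R :=
  \sum_(i < m) q ^+ i.

(** The falling factorials [(x)_{F,k}] are monic of degree [k], so the
    coefficients [Sf n k] are unique; since [x (x)_{F,k} = (x)_{F,k+1} + F_k (x)_{F,k}],
    comparing [x^(n+1) = x * x^n] in this basis gives the triangle recurrence
    [Sf (n+1) k = Sf n (k-1) + F_k Sf n k], from which the formulas for
    [Sf n 1], [Sf n 2] and [Sf n (n-1)] follow by induction on [n].  The rising
    factorial [(x)^{F,n}] is the monic polynomial with roots [-F_0, ..., -F_(n-1)],
    so its coefficient of degree [n-1] is the sum of the [F_i]; as [F_0 = 0], its
    coefficient of degree [1] is the constant term of the product of the other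
    factors. *)
From mathcomp Require Import all_boot all_order all_algebra.
From mathcomp Require Import ring.
Set Implicit Arguments. Unset Strict Implicit. Unset Printing Implicit Defensive.
Import GRing.Theory.
Local Open Scope ring_scope.

Section MonicBasis.
Variables (R : nzRingType) (P : nat -> {poly R}).
Hypotheses (P_monic : forall k, P k \is monic) (size_P : forall k, size (P k) = k.+1).

Lemma coef_sum_monic_basis (a : nat -> R) n :
  (\sum_(k < n.+1) a k *: P k)`_n = a n.
Proof.
rewrite big_ord_recr /= coefD coefZ.
have /monicP := P_monic n; rewrite /lead_coef size_P /= => ->.
rewrite mulr1 coef_sum big1 ?add0r // => k _.
by rewrite coefZ nth_default ?mulr0 // size_P.
Qed.

Lemma monic_basis_coef_inj (a b : nat -> R) n :
  \sum_(k < n.+1) a k *: P k = \sum_(k < n.+1) b k *: P k ->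
  forall k, (k <= n)%N -> a k = b k.
Proof.
elim: n => [|n IHn] eq_ab k.
  by rewrite leqn0 => /eqP ->; rewrite -(coef_sum_monic_basis a) eq_ab coef_sum_monic_basis.
have eq_top : a n.+1 = b n.+1.
  by rewrite -(coef_sum_monic_basis a) eq_ab coef_sum_monic_basis.
rewrite leq_eqVlt => /predU1P [-> // | lt_kn]; apply: IHn lt_kn.
by move: eq_ab; rewrite !(big_ord_recr n.+1) /= eq_top => /addIr.
Qed.

End MonicBasis.

Section FibonacciFactorials.
Variables (R : comNzRingType) (p q : R).

Local Notation F := (Fpq p q).

Lemma ffallF_monic k : ffallF p q k \is monic.
Proof. exact: monic_prod_XsubC. Qed.

Lemma size_ffallF k : size (ffallF p q k) = k.+1.
Proof. by rewrite size_prod_XsubC [index_enum _]unlock -enumT size_enum_ord. Qed.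

Lemma mulX_ffallF k : 'X * ffallF p q k = ffallF p q k.+1 + F k *: ffallF p q k.
Proof. by rewrite /ffallF big_ord_recr /= -mul_polyC; ring. Qed.

Lemma frisF_prod_XsubC n :
  frisF p q n = \prod_(c <- [seq - F i | i <- iota 0 n]) ('X - c%:P).
Proof.
rewrite big_map /frisF -(big_mkord xpredT (fun i => 'X + (F i)%:P)).
by rewrite /index_iota subn0; apply: eq_bigr => i _; rewrite polyCN opprK.
Qed.

Lemma sum_Fpq_from1 n : \sum_(0 <= i < n) F i = \sum_(1 <= i < n) F i.
Proof.
case: n => [|n]; first by rewrite !big_geq.
by rewrite big_nat_recl // add0r big_add1.
Qed.

Lemma coef_frisF_subdiag n : (0 < n)%N -> (frisF p q n)`_n.-1 = \sum_(1 <= i < n) F i.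
Proof.
move=> n_gt0; rewrite frisF_prod_XsubC.
have size_roots : size [seq - F i | i <- iota 0 n] = n by rewrite size_map size_iota.
rewrite -[in n.-1]size_roots coefPn_prod_XsubC ?size_roots -?lt0n //.
by rewrite big_map sumrN opprK -sum_Fpq_from1 /index_iota subn0.
Qed.

Lemma coef1_frisF n : (frisF p q n.+1)`_1 = \prod_(1 <= i < n.+1) F i.
Proof.
rewrite /frisF big_ord_recl /= polyC0 addr0 coefXM /= coef0_prod.
rewrite big_add1 /= big_mkord; apply: eq_bigr => i _.
by rewrite coefD coefX coefC add0r.
Qed.

Lemma qintS m : qint q m.+1 = 1 + q * qint q m.
Proof.
rewrite /qint big_ord_recl expr0 mulr_sumr.
by congr (_ + _); apply: eq_bigr => i _; rewrite exprS.
Qed.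

Variables (Sf : nat -> nat -> R).
Hypothesis Sf_def : forall n, 'X ^+ n = \sum_(k < n.+1) Sf n k *: ffallF p q k.

(* [Sf n k] is unconstrained for [k > n], hence the guards. *)
Lemma Sf_rec n k : (k <= n.+1)%N ->
  Sf n.+1 k = (if k is k'.+1 then Sf n k' else 0) +
              (if (k <= n)%N then F k * Sf n k else 0).
Proof.
move: k; apply: (monic_basis_coef_inj ffallF_monic size_ffallF); rewrite -Sf_def.
rewrite exprS Sf_def mulr_sumr.
under eq_bigr => i _ do rewrite -scalerAr mulX_ffallF scalerDr scalerA.
rewrite big_split /=.
under [RHS]eq_bigr => i _ do rewrite scalerDl.
rewrite big_split /= [X in _ = X + _]big_ord_recl [X in _ = _ + X]big_ord_recr /=.
rewrite scale0r add0r ltnn scale0r addr0.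
by congr (_ + _); apply: eq_bigr => i _; rewrite -ltnS ltn_ord mulrC.
Qed.

Lemma Sf_diag n : Sf n n = 1.
Proof.
elim: n => [|n IHn]; last by rewrite Sf_rec // ltnn addr0.
have := congr1 (fun P : {poly R} => P`_0) (Sf_def 0).
by rewrite /= big_ord1 /ffallF big_ord0 coefZ expr0 coef1 mulr1.
Qed.

Lemma Sf_succ0 n : Sf n.+1 0 = 0.
Proof. by rewrite Sf_rec // mul0r add0r. Qed.

Lemma Sf_succ1 n : Sf n.+1 1 = q ^+ n.
Proof.
elim: n => [|n IHn]; first by rewrite Sf_diag.
by rewrite Sf_rec // Sf_succ0 IHn add0r exprS.
Qed.

Lemma Sf_succ2 n : Sf n.+2 2 = q ^+ n * qint q n.+1.
Proof.
elim: n => [|n IHn]; first by rewrite Sf_diag mul1r /qint big_ord1.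
by rewrite Sf_rec // IHn Sf_succ1 (qintS n.+1) (qintS n) !exprS /=; ring.
Qed.

Lemma Sf_subdiag n : Sf n.+1 n = \sum_(1 <= i < n.+1) F i.
Proof.
rewrite -sum_Fpq_from1; elim: n => [|n IHn]; first by rewrite Sf_succ0 big_nat1.
by rewrite Sf_rec // IHn leqnn Sf_diag mulr1 [RHS]big_nat_recr.
Qed.

End FibonacciFactorials.

Theorem theorem9 (R : comNzRingType) (p q : R) (Sf : nat -> nat -> R)
  (hSf : forall n : nat,
     'X ^+ n = \sum_(k < n.+1) Sf n k *: ffallF p q k) :
  (forall n : nat, (1 <= n)%N ->
     Sf n 1%N = q ^+ n.-1 /\
     cfF p q n 1 = \prod_(1 <= i < n) Fpq p q i) /\
  (forall n : nat, (2 <= n)%N ->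
     Sf n 2%N = q ^+ (n - 2) * qint q n.-1 /\
     cfF p q n n.-1 = Sf n n.-1 /\
     Sf n n.-1 = \sum_(1 <= i < n) Fpq p q i).
Proof.
split=> [[|n] // _ | [|[|n]] // _].
  by rewrite (Sf_succ1 hSf) /cfF coef1_frisF.
by rewrite /cfF subn2 /= (Sf_succ2 hSf) (Sf_subdiag hSf) coef_frisF_subdiag.
Qed.
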